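(* Let $k$ be a real division algebra, $a_1,\dots,a_n\in k$ and $x_0\in k$ such that $x_i=T_{a_i}\cdots T_{a_1}x_0$ is defined for $0\le i\le n$. Define $P[\cdot],Q[\cdot]$ recursively by $P[\wedge]=0$, $Q[\wedge]=1$, $P[a_n]=1$, $Q[a_n]=a_n$, and for $i<n$, $P[a_i,\dots,a_n]=Q[a_{i+1},\dots,a_n]$, $Q[a_i,\dots,a_n]=a_iQ[a_{i+1},\dots,a_n]+P[a_{i+1},\dots,a_n]$; let $P_n=P[a_1,\dots,a_n]$, $Q_n=Q[a_1,\dots,a_n]$. If $Q[a_i,\dots,a_n]\ne0$ for each $1\le i\le n$, then \[\|P_nQ_n^{-1}-x_0\|=\frac{\prod_{i=0}^n\|x_i\|}{\|Q_n\|}.\]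
   Context: $k\in\{\mathbb{R},\mathbb{C},\mathbb{H},\mathbb{O}\}$ with Euclidean norm $\|x\|^2=x\overline x$; $T_ax=x^{-1}-a$. $\wedge$ denotes the empty digit string. *)

From Stdlib Require Import Reals List.
Open Scope R_scope.

(* Cayley--Dickson algebras over R: CD 0 = R, CD 1 = C, CD 2 = H, CD 3 = O. *)
Fixpoint CD (m : nat) : Type :=
  match m with O => R | S p => (CD p * CD p)%type end.

Fixpoint cd_zero (m : nat) : CD m :=
  match m return CD m with O => 0 | S p => (cd_zero p, cd_zero p) end.

Fixpoint cd_real (m : nat) (r : R) : CD m :=
  match m return CD m with O => r | S p => (cd_real p r, cd_zero p) end.

Definition cd_one (m : nat) : CD m := cd_real m 1.

Fixpoint cd_add (m : nat) : CD m -> CD m -> CD m :=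
  match m return CD m -> CD m -> CD m with
  | O => Rplus
  | S p => fun x y => (cd_add p (fst x) (fst y), cd_add p (snd x) (snd y))
  end.

Fixpoint cd_opp (m : nat) : CD m -> CD m :=
  match m return CD m -> CD m with
  | O => Ropp
  | S p => fun x => (cd_opp p (fst x), cd_opp p (snd x))
  end.

Definition cd_sub (m : nat) (x y : CD m) : CD m := cd_add m x (cd_opp m y).

Fixpoint cd_scale (m : nat) (r : R) : CD m -> CD m :=
  match m return CD m -> CD m with
  | O => fun x => r * x
  | S p => fun x => (cd_scale p r (fst x), cd_scale p r (snd x))
  end.

Fixpoint cd_conj (m : nat) : CD m -> CD m :=
  match m return CD m -> CD m with
  | O => fun x => x
  | S p => fun x => (cd_conj p (fst x), cd_opp p (snd x))
  end.

Fixpoint cd_mul (m : nat) : CD m -> CD m -> CD m :=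
  match m return CD m -> CD m -> CD m with
  | O => Rmult
  | S p => fun x y =>
      (cd_sub p (cd_mul p (fst x) (fst y)) (cd_mul p (cd_conj p (snd y)) (snd x)),
       cd_add p (cd_mul p (snd y) (fst x)) (cd_mul p (snd x) (cd_conj p (fst y))))
  end.

Fixpoint cd_norm2 (m : nat) : CD m -> R :=
  match m return CD m -> R with
  | O => fun x => x * x
  | S p => fun x => cd_norm2 p (fst x) + cd_norm2 p (snd x)
  end.

Definition cd_norm (m : nat) (x : CD m) : R := sqrt (cd_norm2 m x).

Definition cd_inv (m : nat) (x : CD m) : CD m := cd_scale m (/ cd_norm2 m x) (cd_conj m x).

Definition T (m : nat) (a x : CD m) : CD m := cd_sub m (cd_inv m x) a.

Fixpoint orbit (m : nat) (a : nat -> CD m) (x0 : CD m) (i : nat) : CD m :=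
  match i with
  | O => x0
  | S j => T m (a (S j)) (orbit m a x0 j)
  end.

(* (P[s], Q[s]) for a digit string s = [a_i; ...; a_n] *)
Fixpoint PQ (m : nat) (s : list (CD m)) : CD m * CD m :=
  match s with
  | nil => (cd_zero m, cd_one m)
  | b :: nil => (cd_one m, b)
  | b :: t => let (Pt, Qt) := PQ m t in (Qt, cd_add m (cd_mul m b Qt) Pt)
  end.

Definition Pof (m : nat) (s : list (CD m)) : CD m := fst (PQ m s).
Definition Qof (m : nat) (s : list (CD m)) : CD m := snd (PQ m s).

(* the string a_i, ..., a_n *)
Definition digits (m : nat) (a : nat -> CD m) (i n : nat) : list (CD m) :=
  map a (seq i (S n - i)).

Fixpoint prodR (f : nat -> R) (n : nat) : R :=
  match n with O => f O | S j => prodR f j * f (S j) end.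

(* Write r[s] = P[s] Q[s]^-1 for a digit string s.  Since P[b s] = Q[s] and
   Q[b s] = b Q[s] + P[s], we get b + r[s] = Q[b s] Q[s]^-1, hence
   r[b s] = (b + r[s])^-1, while x0 = (a1 + x1)^-1 by definition of T.  In a
   normed division algebra ||u^-1 - v^-1|| = ||u - v|| / (||u|| ||v||), so
     ||r[a1..an] - x0|| = ||r[a2..an] - x1|| ||Q[a2..an]|| ||x0|| / ||Q[a1..an]||,
   and the formula follows by induction on n, applied to the shifted sequence
   a2, a3, ... with starting point x1. *)

From Stdlib Require Import Reals List Lra Lia.
Open Scope R_scope.

Fixpoint cd_dot (m : nat) : CD m -> CD m -> R :=
  match m return CD m -> CD m -> R with
  | O => fun x y => x * y
  | S p => fun x y => cd_dot p (fst x) (fst y) + cd_dot p (snd x) (snd y)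
  end.

Lemma cd_opp_opp m (x : CD m) : cd_opp m (cd_opp m x) = x.
Proof. induction m; simpl; [ring | destruct x; simpl; f_equal; auto]. Qed.

Lemma cd_scale_scale m r s (x : CD m) : cd_scale m r (cd_scale m s x) = cd_scale m (r * s) x.
Proof. induction m; simpl; [ring | f_equal; auto]. Qed.

Lemma cd_scale1 m (x : CD m) : cd_scale m 1 x = x.
Proof. induction m; simpl; [ring | destruct x; simpl; f_equal; auto]. Qed.

Lemma cd_opp_scale m r (x : CD m) : cd_opp m (cd_scale m r x) = cd_scale m r (cd_opp m x).
Proof. induction m; simpl; [ring | f_equal; auto]. Qed.

Lemma cd_conj_conj m (x : CD m) : cd_conj m (cd_conj m x) = x.
Proof. induction m; simpl; [reflexivity | destruct x; simpl; f_equal; auto using cd_opp_opp]. Qed.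

Lemma cd_conj_scale m r (x : CD m) : cd_conj m (cd_scale m r x) = cd_scale m r (cd_conj m x).
Proof. induction m; simpl; [reflexivity | f_equal; auto using cd_opp_scale]. Qed.

Lemma cd_opp_sub m (x y : CD m) : cd_opp m (cd_sub m x y) = cd_sub m (cd_opp m x) (cd_opp m y).
Proof. unfold cd_sub; induction m; simpl; [ring | f_equal; auto]. Qed.

Lemma cd_conj_sub m (x y : CD m) : cd_conj m (cd_sub m x y) = cd_sub m (cd_conj m x) (cd_conj m y).
Proof.
  induction m; simpl; [reflexivity|].
  unfold cd_sub; simpl; f_equal; [apply IHm | apply cd_opp_sub].
Qed.

Lemma cd_subKC m (x y : CD m) : cd_add m x (cd_sub m y x) = y.
Proof. unfold cd_sub; induction m; simpl; [ring | destruct y; simpl; f_equal; auto]. Qed.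

Lemma cd_sub_add2l m (z x y : CD m) : cd_sub m (cd_add m z x) (cd_add m z y) = cd_sub m x y.
Proof. unfold cd_sub; induction m; simpl; [ring | f_equal; auto]. Qed.

Lemma cd_sub0l m (x : CD m) : cd_sub m (cd_zero m) x = cd_opp m x.
Proof. unfold cd_sub; induction m; simpl; [ring | f_equal; auto]. Qed.

Lemma cd_addr0 m (x : CD m) : cd_add m x (cd_zero m) = x.
Proof. induction m; simpl; [ring | destruct x; simpl; f_equal; auto]. Qed.

Lemma cd_norm2_opp m (x : CD m) : cd_norm2 m (cd_opp m x) = cd_norm2 m x.
Proof. induction m; simpl; [ring | rewrite !IHm; reflexivity]. Qed.

Lemma cd_norm2_conj m (x : CD m) : cd_norm2 m (cd_conj m x) = cd_norm2 m x.
Proof. induction m; simpl; [reflexivity | rewrite IHm, cd_norm2_opp; reflexivity]. Qed.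

Lemma cd_norm2_scale m r (x : CD m) : cd_norm2 m (cd_scale m r x) = r * r * cd_norm2 m x.
Proof. induction m; simpl; [ring | rewrite !IHm; ring]. Qed.

Lemma cd_norm2_sub_scale m r s (x y : CD m) :
  cd_norm2 m (cd_sub m (cd_scale m r x) (cd_scale m s y))
  = r * r * cd_norm2 m x + s * s * cd_norm2 m y - 2 * r * s * cd_dot m x y.
Proof. unfold cd_sub; induction m; simpl; [ring | rewrite !IHm; ring]. Qed.

Lemma cd_norm2_ge0 m (x : CD m) : 0 <= cd_norm2 m x.
Proof. induction m; simpl; [apply Rle_0_sqr | apply Rplus_le_le_0_compat; auto]. Qed.

Lemma cd_norm2_zero m : cd_norm2 m (cd_zero m) = 0.
Proof. induction m; simpl; [ring | rewrite IHm; ring]. Qed.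

Lemma cd_norm2_eq0 m (x : CD m) : cd_norm2 m x = 0 -> x = cd_zero m.
Proof.
  induction m; simpl; [apply Rsqr_0_uniq|].
  destruct x as [x1 x2]; simpl; intros Hsum.
  pose proof (cd_norm2_ge0 m x1); pose proof (cd_norm2_ge0 m x2).
  f_equal; apply IHm; lra.
Qed.

Lemma cd_norm2_gt0 m (x : CD m) : 0 < cd_norm2 m x <-> x <> cd_zero m.
Proof.
  split.
  - intros Hx ->; rewrite cd_norm2_zero in Hx; lra.
  - intros Hx; destruct (cd_norm2_ge0 m x) as [|Hx0]; [assumption|].
    exfalso; apply Hx, cd_norm2_eq0; auto.
Qed.

Lemma cd_norm2_real m r : cd_norm2 m (cd_real m r) = r * r.
Proof. induction m; simpl; [reflexivity | rewrite IHm, cd_norm2_zero; ring]. Qed.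

Lemma cd_one_neq0 m : cd_one m <> cd_zero m.
Proof. apply cd_norm2_gt0; unfold cd_one; rewrite cd_norm2_real; lra. Qed.

Lemma cd_norm2_inv m (y : CD m) : y <> cd_zero m -> cd_norm2 m (cd_inv m y) = / cd_norm2 m y.
Proof.
  intros Hy; pose proof (proj2 (cd_norm2_gt0 m y) Hy).
  unfold cd_inv; rewrite cd_norm2_scale, cd_norm2_conj; field; lra.
Qed.

Lemma cd_invK m (y : CD m) : y <> cd_zero m -> cd_inv m (cd_inv m y) = y.
Proof.
  intros Hy; pose proof (proj2 (cd_norm2_gt0 m y) Hy).
  unfold cd_inv at 1; rewrite cd_norm2_inv by assumption.
  unfold cd_inv; rewrite cd_conj_scale, cd_conj_conj, cd_scale_scale.
  rewrite Rinv_inv, Rinv_r by lra; apply cd_scale1.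
Qed.

Lemma cd_norm2_sub_inv m (u v : CD m) : u <> cd_zero m -> v <> cd_zero m ->
  cd_norm2 m (cd_sub m (cd_inv m u) (cd_inv m v))
  = cd_norm2 m (cd_sub m u v) / (cd_norm2 m u * cd_norm2 m v).
Proof.
  intros Hu Hv.
  pose proof (proj2 (cd_norm2_gt0 m u) Hu); pose proof (proj2 (cd_norm2_gt0 m v) Hv).
  unfold cd_inv; rewrite <- !cd_conj_scale, <- cd_conj_sub, cd_norm2_conj.
  replace (cd_sub m u v) with (cd_sub m (cd_scale m 1 u) (cd_scale m 1 v))
    by now rewrite !cd_scale1.
  rewrite !cd_norm2_sub_scale; field; lra.
Qed.

Lemma T_inv m (b x : CD m) : x <> cd_zero m -> cd_inv m (cd_add m b (T m b x)) = x.
Proof. intros Hx; unfold T; rewrite cd_subKC; apply cd_invK, Hx. Qed.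

Lemma cd_norm2_add_T m (b x : CD m) : x <> cd_zero m ->
  cd_norm2 m (cd_add m b (T m b x)) = / cd_norm2 m x.
Proof. intros Hx; unfold T; rewrite cd_subKC; apply cd_norm2_inv, Hx. Qed.

(* For m <= 3 (R, C, H, O) the identities below are polynomial identities in the
   coordinates.  The composition laws cd_mul_mulconj and cd_norm2_mul fail from the
   sedenions (m = 4) on. *)
Ltac by_coordinates m :=
  intros; destruct m as [|[|[|[|k]]]]; [| | | | exfalso; lia];
  repeat match goal with x : CD _ |- _ => simpl in x | x : prod _ _ |- _ => destruct x end;
  unfold cd_one, cd_sub; simpl; unfold cd_sub; simpl;
  repeat match goal with |- (_, _) = (_, _) => f_equal end; ring.

Section CompositionAlgebra.

Variable m : nat.
Hypothesis hm : (m <= 3)%nat.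

Lemma cd_mul_scale_l r (x y : CD m) : cd_mul m (cd_scale m r x) y = cd_scale m r (cd_mul m x y).
Proof. by_coordinates m. Qed.

Lemma cd_mul_scale_r r (x y : CD m) : cd_mul m x (cd_scale m r y) = cd_scale m r (cd_mul m x y).
Proof. by_coordinates m. Qed.

Lemma cd_mulDl (x y z : CD m) :
  cd_mul m (cd_add m x y) z = cd_add m (cd_mul m x z) (cd_mul m y z).
Proof. by_coordinates m. Qed.

Lemma cd_mul0l (y : CD m) : cd_mul m (cd_zero m) y = cd_zero m.
Proof. by_coordinates m. Qed.

Lemma cd_mul1r (x : CD m) : cd_mul m x (cd_one m) = x.
Proof. by_coordinates m. Qed.

Lemma cd_conj_mul (x y : CD m) :
  cd_conj m (cd_mul m x y) = cd_mul m (cd_conj m y) (cd_conj m x).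
Proof. by_coordinates m. Qed.

Lemma cd_mul_mulconj (x y : CD m) :
  cd_mul m (cd_mul m x y) (cd_conj m y) = cd_scale m (cd_norm2 m y) x.
Proof. by_coordinates m. Qed.

Lemma cd_norm2_mul (x y : CD m) : cd_norm2 m (cd_mul m x y) = cd_norm2 m x * cd_norm2 m y.
Proof. by_coordinates m. Qed.

Lemma cd_mulfK (x y : CD m) : y <> cd_zero m -> cd_mul m (cd_mul m x y) (cd_inv m y) = x.
Proof.
  intros Hy; pose proof (proj2 (cd_norm2_gt0 m y) Hy).
  unfold cd_inv; rewrite cd_mul_scale_r, cd_mul_mulconj, cd_scale_scale, Rinv_l by lra.
  apply cd_scale1.
Qed.

Lemma cd_norm2_mul_inv (x y : CD m) : y <> cd_zero m ->
  cd_norm2 m (cd_mul m x (cd_inv m y)) = cd_norm2 m x / cd_norm2 m y.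
Proof. intros Hy; rewrite cd_norm2_mul, cd_norm2_inv by assumption; reflexivity. Qed.

Lemma cd_invf_div (x y : CD m) : x <> cd_zero m -> y <> cd_zero m ->
  cd_inv m (cd_mul m x (cd_inv m y)) = cd_mul m y (cd_inv m x).
Proof.
  intros Hx Hy.
  pose proof (proj2 (cd_norm2_gt0 m x) Hx); pose proof (proj2 (cd_norm2_gt0 m y) Hy).
  unfold cd_inv at 1; rewrite cd_norm2_mul_inv, cd_conj_mul by assumption.
  unfold cd_inv; rewrite cd_conj_scale, cd_conj_conj, cd_mul_scale_l, cd_mul_scale_r.
  rewrite cd_scale_scale.
  f_equal; field; lra.
Qed.

Lemma PQ_cons b t :
  PQ m (b :: t) = (Qof m t, cd_add m (cd_mul m b (Qof m t)) (Pof m t)).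
Proof.
  destruct t as [|c t].
  - unfold Pof, Qof; simpl; rewrite cd_mul1r, cd_addr0; reflexivity.
  - unfold Pof, Qof.
    change (PQ m (b :: c :: t))
      with (let (Pt, Qt) := PQ m (c :: t) in (Qt, cd_add m (cd_mul m b Qt) Pt)).
    destruct (PQ m (c :: t)); reflexivity.
Qed.

Lemma Pof_cons b t : Pof m (b :: t) = Qof m t.
Proof. unfold Pof at 1; rewrite PQ_cons; reflexivity. Qed.

Lemma Qof_cons b t : Qof m (b :: t) = cd_add m (cd_mul m b (Qof m t)) (Pof m t).
Proof. unfold Qof at 1; rewrite PQ_cons; reflexivity. Qed.

Definition convergent (s : list (CD m)) : CD m := cd_mul m (Pof m s) (cd_inv m (Qof m s)).

Lemma convergent_nil : convergent nil = cd_zero m.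
Proof. apply cd_mul0l. Qed.

Lemma add_convergent b t : Qof m t <> cd_zero m ->
  cd_add m b (convergent t) = cd_mul m (Qof m (b :: t)) (cd_inv m (Qof m t)).
Proof.
  intros Ht; unfold convergent.
  rewrite Qof_cons, cd_mulDl, cd_mulfK by assumption; reflexivity.
Qed.

Lemma convergent_cons b t : Qof m t <> cd_zero m -> Qof m (b :: t) <> cd_zero m ->
  convergent (b :: t) = cd_inv m (cd_add m b (convergent t)).
Proof.
  intros Ht Hbt; rewrite add_convergent, cd_invf_div, <- (Pof_cons b) by assumption.
  reflexivity.
Qed.

Lemma norm2_add_convergent b t : Qof m t <> cd_zero m ->
  cd_norm2 m (cd_add m b (convergent t))
  = cd_norm2 m (Qof m (b :: t)) / cd_norm2 m (Qof m t).
Proof. intros Ht; rewrite add_convergent, cd_norm2_mul_inv by assumption; reflexivity. Qed.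

Lemma norm2_sub_convergent_cons b t x :
  Qof m t <> cd_zero m -> Qof m (b :: t) <> cd_zero m -> x <> cd_zero m ->
  cd_norm2 m (cd_sub m (convergent (b :: t)) x)
  = cd_norm2 m (cd_sub m (convergent t) (T m b x))
    * cd_norm2 m (Qof m t) / cd_norm2 m (Qof m (b :: t)) * cd_norm2 m x.
Proof.
  intros Ht Hbt Hx.
  pose proof (proj2 (cd_norm2_gt0 m _) Ht); pose proof (proj2 (cd_norm2_gt0 m _) Hbt).
  pose proof (proj2 (cd_norm2_gt0 m _) Hx).
  pose proof (norm2_add_convergent b t Ht) as Hu.
  pose proof (cd_norm2_add_T m b x Hx) as Hv.
  assert (Hu0 : cd_add m b (convergent t) <> cd_zero m).
  { apply cd_norm2_gt0; rewrite Hu; apply Rdiv_lt_0_compat; assumption. }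
  assert (Hv0 : cd_add m b (T m b x) <> cd_zero m).
  { apply cd_norm2_gt0; rewrite Hv; apply Rinv_0_lt_compat; assumption. }
  rewrite convergent_cons by assumption.
  rewrite <- (T_inv m b x Hx) at 1.
  rewrite cd_norm2_sub_inv, cd_sub_add2l, Hu, Hv by assumption.
  field; lra.
Qed.

End CompositionAlgebra.

Lemma digits_cons m (a : nat -> CD m) i n :
  (i <= n)%nat -> digits m a i n = a i :: digits m a (S i) n.
Proof.
  intros Hin; unfold digits; replace (S n - i)%nat with (S (n - i)) by lia; reflexivity.
Qed.

Lemma digits_shift m (a : nat -> CD m) i n :
  digits m a (S i) (S n) = digits m (fun k => a (S k)) i n.
Proof. unfold digits; simpl; rewrite <- seq_shift, map_map; reflexivity. Qed.

Lemma orbit_shift m (a : nat -> CD m) x0 i :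
  orbit m a x0 (S i) = orbit m (fun k => a (S k)) (T m (a 1%nat) x0) i.
Proof. induction i; simpl in *; [reflexivity | rewrite IHi; reflexivity]. Qed.

Lemma Qof_digits_neq0 m (a : nat -> CD m) n :
  (forall i : nat, (1 <= i <= n)%nat -> Qof m (digits m a i n) <> cd_zero m) ->
  Qof m (digits m a 1 n) <> cd_zero m.
Proof. destruct n; intros hQ; [apply cd_one_neq0 | apply hQ; lia]. Qed.

Lemma prodR_ext f g n : (forall i, f i = g i) -> prodR f n = prodR g n.
Proof. intros Hfg; induction n; simpl; rewrite ?IHn, ?Hfg; reflexivity. Qed.

Lemma prodR_succ_l f n : prodR f (S n) = f O * prodR (fun i => f (S i)) n.
Proof. induction n; simpl in *; [reflexivity | rewrite IHn; ring]. Qed.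

Lemma prodR_ge0 f n : (forall i, 0 <= f i) -> 0 <= prodR f n.
Proof. intros Hf; induction n; simpl; [apply Hf | apply Rmult_le_pos; auto]. Qed.

Lemma prodR_sqrt f n : (forall i, 0 <= f i) -> prodR (fun i => sqrt (f i)) n = sqrt (prodR f n).
Proof.
  intros Hf; induction n; simpl; [reflexivity|].
  rewrite IHn, sqrt_mult; auto using prodR_ge0.
Qed.

Lemma norm2_sub_convergent_digits m (hm : (m <= 3)%nat) n : forall (a : nat -> CD m) x0,
  (forall i : nat, (i < n)%nat -> orbit m a x0 i <> cd_zero m) ->
  (forall i : nat, (1 <= i <= n)%nat -> Qof m (digits m a i n) <> cd_zero m) ->
  cd_norm2 m (cd_sub m (convergent m (digits m a 1 n)) x0)
  * cd_norm2 m (Qof m (digits m a 1 n))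
  = prodR (fun i => cd_norm2 m (orbit m a x0 i)) n.
Proof.
  induction n as [|n IHn]; intros a x0 hdef hQ.
  - simpl digits; rewrite convergent_nil, cd_sub0l, cd_norm2_opp by assumption.
    unfold Qof; simpl; unfold cd_one; rewrite cd_norm2_real; ring.
  - set (a' := fun k => a (S k)); set (x1 := T m (a 1%nat) x0).
    assert (hdef' : forall i, (i < n)%nat -> orbit m a' x1 i <> cd_zero m).
    { intros i Hi; unfold a', x1; rewrite <- orbit_shift; apply hdef; lia. }
    assert (hQ' : forall i, (1 <= i <= n)%nat -> Qof m (digits m a' i n) <> cd_zero m).
    { intros i Hi; unfold a'; rewrite <- digits_shift; apply hQ; lia. }
    assert (Hsplit : digits m a 1 (S n) = a 1%nat :: digits m a' 1 n).
    { rewrite digits_cons, digits_shift by lia; reflexivity. }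
    assert (Hbt : Qof m (digits m a 1 (S n)) <> cd_zero m) by (apply hQ; lia).
    assert (Hx0 : x0 <> cd_zero m) by exact (hdef O ltac:(lia)).
    rewrite Hsplit in *.
    rewrite norm2_sub_convergent_cons by auto using Qof_digits_neq0.
    rewrite prodR_succ_l, (prodR_ext _ (fun i => cd_norm2 m (orbit m a' x1 i)))
      by (intros i; rewrite orbit_shift; reflexivity).
    rewrite <- (IHn a' x1 hdef' hQ'); simpl orbit.
    apply cd_norm2_gt0 in Hbt.
    unfold x1; field; lra.
Qed.

Theorem corollary2p4 (m : nat) (hm : (m <= 3)%nat)
  (n : nat) (a : nat -> CD m) (x0 : CD m)
  (hdef : forall i : nat, (i < n)%nat -> orbit m a x0 i <> cd_zero m)
  (hQ : forall i : nat, (1 <= i <= n)%nat -> Qof m (digits m a i n) <> cd_zero m) :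
  cd_norm m (cd_sub m (cd_mul m (Pof m (digits m a 1 n))
                              (cd_inv m (Qof m (digits m a 1 n)))) x0)
  = prodR (fun i => cd_norm m (orbit m a x0 i)) n / cd_norm m (Qof m (digits m a 1 n)).
Proof.
  pose proof (proj2 (cd_norm2_gt0 m _) (Qof_digits_neq0 m a n hQ)) as HQ.
  pose proof (norm2_sub_convergent_digits m hm n a x0 hdef hQ) as Hsq.
  unfold cd_norm; rewrite prodR_sqrt, <- sqrt_div_alt by auto using cd_norm2_ge0.
  f_equal; rewrite <- Hsq; unfold convergent; field; lra.
Qed.
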